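(* The matrix $$U_6=\tfrac12 S_0\otimes\left(I_2\otimes I_2+\sigma_1\otimes\sigma_1+\sigma_2\otimes\sigma_2+\sigma_3\otimes\sigma_3\right)+\tfrac{1}{\sqrt2}S_3\otimes\left(I_2\otimes\sigma_1+\sigma_2\otimes\sigma_3\right)$$ on $\mathbb{C}^2\otimes\mathbb{C}^2\otimes\mathbb{C}^2$ is unitary and $\mathrm{sr}(U_6)=6$.
   Context: $S_0=\begin{bmatrix}1&0\\0&0\end{bmatrix}$, $S_1=\begin{bmatrix}0&1\\0&0\end{bmatrix}$, $S_2=\begin{bmatrix}0&0\\1&0\end{bmatrix}$, $S_3=\begin{bmatrix}0&0\\0&1\end{bmatrix}$. $I_2$ is the $2\times2$ identity and $\sigma_1=\begin{bmatrix}0&1\\1&0\end{bmatrix}$, $\sigma_2=\begin{bmatrix}0&-i\\i&0\end{bmatrix}$, $\sigma_3=\begin{bmatrix}1&0\\0&-1\end{bmatrix}$ are the Pauli matrices. For a matrix $U$ on $\mathbb{C}^2\otimes\mathbb{C}^2\otimes\mathbb{C}^2$ (systems $A,B,C$), its Schmidt rank $\mathrm{sr}(U)$ is the least integer $r$ such that $U=\sum_{j=1}^r A_j\otimes B_j\otimes C_j$ with $A_j,B_j,C_j$ complex $2\times 2$ matrices (i.e. the tensor rank of $U$). *)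

From mathcomp Require Import all_boot all_order all_algebra all_field.
From mathcomp.real_closed Require Import mxtens.
Set Implicit Arguments. Unset Strict Implicit. Unset Printing Implicit Defensive.
Import GRing.Theory Num.Theory.
Local Open Scope ring_scope.

Definition M2 := 'M[algC]_2.
Definition M8 := 'M[algC]_(2 * (2 * 2)).

Definition S0 : M2 := \matrix_(i < 2, j < 2) ((i == 0 :> nat) && (j == 0 :> nat))%:R.
Definition S1 : M2 := \matrix_(i < 2, j < 2) ((i == 0 :> nat) && (j == 1 :> nat))%:R.
Definition S2 : M2 := \matrix_(i < 2, j < 2) ((i == 1 :> nat) && (j == 0 :> nat))%:R.
Definition S3 : M2 := \matrix_(i < 2, j < 2) ((i == 1 :> nat) && (j == 1 :> nat))%:R.

Definition I2 : M2 := 1%:M.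
Definition sigma1 : M2 := S1 + S2.
Definition sigma2 : M2 := (- 'i) *: S1 + 'i *: S2.
Definition sigma3 : M2 := S0 - S3.

Definition tens3 (A B C : M2) : M8 := A *t (B *t C).

Definition adjmx (U : M8) : M8 := (map_mx (fun z : algC => z^*) U)^T.
Definition unitary (U : M8) : Prop := U *m adjmx U = 1%:M /\ adjmx U *m U = 1%:M.

Definition sr_le (U : M8) (r : nat) : Prop :=
  exists (A B C : 'I_r -> M2), U = \sum_(j < r) tens3 (A j) (B j) (C j).

Definition sr_eq (U : M8) (r : nat) : Prop :=
  sr_le U r /\ forall r', sr_le U r' -> (r <= r')%N.

Definition U6 : M8 :=
  (1 / 2) *: tens3 S0 I2 I2 + (1 / 2) *: tens3 S0 sigma1 sigma1
  + (1 / 2) *: tens3 S0 sigma2 sigma2 + (1 / 2) *: tens3 S0 sigma3 sigma3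
  + (1 / sqrtC 2) *: tens3 S3 I2 sigma1 + (1 / sqrtC 2) *: tens3 S3 sigma2 sigma3.

(* Unitarity and the upper bound are explicit computations: U6 is a
   self-adjoint involution, and the identity
   P (x) P + Q (x) Q = ((P + Q) (x) (P + Q) + (P - Q) (x) (P - Q)) / 2
   turns its six-term-plus-two expression into six elementary tensors.

   For the lower bound, slice a decomposition U6 = sum_{j<r} A_j (x) B_j (x) C_j
   along system A: the (a, a) block of U6 equals  Bcols * diag(A_j a a) * Crows,
   a factorization through C^r.  The two slices of U6 are the swap X of B and C
   (an involution) and a matrix Y with Y X = Y, Y^2 = 0 and rank Y = 2.  The
   general linear-algebra fact proved first is that in such a pencil, if
   U diag(a) W is invertible, r <= n + 1 and N = U diag(b) W (U diag(a) W)^-1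
   squares to zero, then rank N <= 1: after shifting a by a multiple of b one
   may assume U W = 1, and then the kernels of two maps of corank <= 1 force
   ker N to contain a space of dimension n - 1.  With n = 4 this rules out
   r <= 5. *)

From mathcomp Require Import all_boot all_order all_algebra all_field.
From mathcomp.real_closed Require Import mxtens.
From mathcomp Require Import zify ring.
Import Order.TTheory GRing.Theory Num.Theory.
Local Open Scope ring_scope.

Section SquareZeroSlice.
Variables (F : fieldType) (n r : nat).
Variables (U : 'M[F]_(n, r)) (W : 'M[F]_(r, n)) (d : 'rV[F]_r).
Hypothesis short_sum : (r <= n.+1)%N.
Hypothesis UW1 : U *m W = 1%:M.

Let D := diag_mx d.
Let N := U *m D *m W.
Let c := cokermx U.

(* U has full row rank since U W = 1; hence its cokernel has rank <= 1. *)
Lemma rank_factor_left : \rank U = n.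
Proof.
apply/eqP; rewrite eqn_leq rank_leq_row /=.
by rewrite -{1}(mxrank1 F n) -UW1 mxrankM_maxl.
Qed.

Lemma slice_intertwine (z : 'rV[F]_n) :
  z *m (U *m D *m c) = 0 -> z *m N *m U = z *m U *m D.
Proof.
move=> zUDc.
have : (z *m U *m D <= U)%MS by rewrite submxE -!mulmxA (mulmxA U) zUDc.
case/submxP=> t zUD.
by rewrite /N !mulmxA zUD -(mulmxA t) UW1 mulmx1.
Qed.

Lemma diag_sq_eq0 (x : 'rV[F]_r) : x *m D *m D = 0 -> x *m D = 0.
Proof.
move/rowP=> xDD; apply/rowP=> j; move: (xDD j).
rewrite /D !mul_mx_diag !mxE => /eqP; rewrite mulf_eq0 => /orP[/eqP //|/eqP dj0].
by rewrite dj0 mulr0.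
Qed.

Hypothesis NN0 : N *m N = 0.

Let K := kermx (U *m D *m c).
Let K2 := kermx (N *m (U *m D *m c)).

Lemma common_kernel_N0 (z : 'rV[F]_n) : (z <= K)%MS -> (z <= K2)%MS -> z *m N = 0.
Proof.
rewrite !sub_kermx => /eqP zK /eqP zK2.
have e1 := slice_intertwine _ zK.
have e2 : z *m N *m N *m U = z *m N *m U *m D by apply: slice_intertwine; rewrite -mulmxA.
have zUD0 : z *m U *m D = 0.
  apply: diag_sq_eq0.
  by rewrite -e1 -e2 -(mulmxA z N N) NN0 mulmx0 !mul0mx.
by rewrite -[z *m N]mulmx1 -UW1 mulmxA e1 zUD0 mul0mx.
Qed.

(* Main lemma: if I_n = U W factors through F^r with r <= n+1, every
   square-zero slice U diag(d) W has rank at most 1.  Both kernels K, K2 have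
   rank >= n-1, so K :&: K2 (of rank >= n-2) fills ker N; then N maps K into
   K :&: K2, so K itself lies in ker N, which is too small if rank N >= 2. *)
Lemma square_zero_slice_rank_le1 : (\rank N <= 1)%N.
Proof.
rewrite leqNgt; apply/negP => rankN2.
have rc : (\rank c <= 1)%N by rewrite mxrank_coker rank_factor_left; lia.
have rK : (n.-1 <= \rank K)%N.
  by rewrite mxrank_ker; have := mxrankM_maxr (U *m D) c; lia.
have rK2 : (n.-1 <= \rank K2)%N.
  by rewrite mxrank_ker; have := mxrankM_maxr (N *m (U *m D)) c; rewrite !mulmxA; lia.
have rKK2 : (n - 2 <= \rank (K :&: K2))%N.
  by have := mxrank_sum_cap K K2; have := rank_leq_col (K + K2)%MS; lia.
have rKN : (\rank (kermx N) <= n - 2)%N by rewrite mxrank_ker; lia.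
have capKN : (K :&: K2 <= kermx N)%MS.
  apply/row_subP=> i; rewrite sub_kermx; apply/eqP; apply: common_kernel_N0.
    exact: submx_trans (row_sub _ _) (capmxSl _ _).
  exact: submx_trans (row_sub _ _) (capmxSr _ _).
have KNcap : (kermx N <= K :&: K2)%MS.
  have := mxrank_leqif_sup capKN => -[_ <-]; apply/eqP; have := mxrankS capKN; lia.
have KKN : (K <= kermx N)%MS.
  apply/row_subP=> i; rewrite sub_kermx; apply/eqP; apply: common_kernel_N0.
    exact: row_sub.
  have NiK : (row i K *m N <= K)%MS.
    apply: submx_trans (submx_trans KNcap (capmxSl _ _)).
    by rewrite sub_kermx -mulmxA NN0 mulmx0.
  by move: NiK; rewrite !sub_kermx (mulmxA (row i K) N).
by have := mxrankS KKN; have := rank_leq_row N; lia.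
Qed.

End SquareZeroSlice.

(* Over a numeric field some multiple of b can be added to a so that the
   result is nonzero wherever b is: take s larger than every |a_j / b_j|. *)
Lemma shift_avoids_zeros (R : numFieldType) r (a b : 'rV[R]_r) :
  exists s : R, forall j, b 0 j != 0 -> a 0 j + s * b 0 j != 0.
Proof.
set s := 1 + \sum_j `|a 0 j / b 0 j|.
have s_ge0 : 0 <= s by rewrite addr_ge0 ?ler01 ?sumr_ge0.
exists s => j bj0; apply/eqP => abs0.
have s_gt : `|a 0 j / b 0 j| < s.
  rewrite ltr_pwDl ?ltr01 // (bigD1 j) //= lerDl.
  by apply: sumr_ge0 => i _; exact: normr_ge0.
have sE : s = - (a 0 j / b 0 j).
  have e : s * b 0 j = - a 0 j by apply/eqP; rewrite -addr_eq0 addrC abs0.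
  by rewrite -[s](mulfK bj0) e mulNr.
by move: s_gt; rewrite -normrN -sE ger0_norm // ltxx.
Qed.

(* Pencil version: if U diag(a) W is invertible with inverse Xi and the slice
   N = U diag(b) W Xi squares to zero, then rank N <= 1 whenever r <= n+1.
   Replacing a by a + s b (nonzero where b is) reduces to the identity case. *)
Lemma square_zero_pencil_rank_le1 (R : numFieldType) n r
    (U : 'M[R]_(n, r)) (W : 'M[R]_(r, n)) (a b : 'rV[R]_r) (Xi : 'M[R]_n) :
  (r <= n.+1)%N -> U *m diag_mx a *m W *m Xi = 1%:M ->
  let N := U *m diag_mx b *m W *m Xi in
  N *m N = 0 -> (\rank N <= 1)%N.
Proof.
move=> short_sum XXi N NN0.
have [s hs] := shift_avoids_zeros _ _ a b.
set a' := \row_j (a 0 j + s * b 0 j).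
set U' := U *m diag_mx a'.
set W' := W *m Xi *m (1%:M - s *: N).
have U'E : U' = U *m diag_mx a + s *: (U *m diag_mx b).
  by apply/matrixP=> i j; rewrite /U' !mul_mx_diag !mxE; ring.
set d := \row_j (b 0 j / a' 0 j).
have U'd : U' *m diag_mx d = U *m diag_mx b.
  apply/matrixP=> i j; rewrite /U' !mul_mx_diag !mxE.
  have [->|bj0] := eqVneq (b 0 j) 0; first by rewrite mul0r !mulr0.
  by rewrite -mulrA [_ * (_ / _)]mulrC divfK //; exact: hs.
have NW' : U *m diag_mx b *m W' = N.
  by rewrite /W' !mulmxA -/N mulmxBr mulmx1 -scalemxAr NN0 scaler0 subr0.
have U'WXi : U' *m W *m Xi = 1%:M + s *: N.
  by rewrite U'E mulmxDl mulmxDl -!scalemxAl XXi.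
have U'W' : U' *m W' = 1%:M.
  rewrite /W' !mulmxA U'WXi mulmxBr mulmx1 mulmxDl mul1mx -scalemxAl.
  by rewrite -scalemxAr NN0 !scaler0 addr0 addrK.
have := @square_zero_slice_rank_le1 _ _ _ U' W' d short_sum U'W'.
by rewrite U'd NW'; exact.
Qed.
(* Slicing along system A: the (a, a) block of an operator on A (x) B (x) C,
   viewed as an operator on B (x) C. *)
Definition sliceA (a : 'I_2) (M : M8) : 'M[algC]_(2 * 2) :=
  \matrix_(p, q) M (mxtens_index (a, mxtens_index ((mxtens_unindex p).1, (mxtens_unindex q).1)))
                   (mxtens_index (a, mxtens_index ((mxtens_unindex p).2, (mxtens_unindex q).2))).

Definition flat_cols {r} (B : 'I_r -> M2) : 'M[algC]_(2 * 2, r) :=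
  \matrix_(p, j) B j (mxtens_unindex p).1 (mxtens_unindex p).2.
Definition flat_rows {r} (C : 'I_r -> M2) : 'M[algC]_(r, 2 * 2) :=
  \matrix_(j, q) C j (mxtens_unindex q).1 (mxtens_unindex q).2.

Lemma sliceA_sum r (A B C : 'I_r -> M2) a :
  sliceA a (\sum_(j < r) tens3 (A j) (B j) (C j)) =
  flat_cols B *m diag_mx (\row_j A j a a) *m flat_rows C.
Proof.
apply/matrixP=> p q; rewrite mul_mx_diag [LHS]mxE summxE [RHS]mxE.
by apply: eq_bigr => j _; rewrite /tens3 !tensmxE !mxE; ring.
Qed.

Definition table n (f : nat -> nat -> algC) : 'M[algC]_n := \matrix_(i, j) f i j.

Lemma sqr_i : 'i ^+ 2 = -1 :> algC. Proof. exact: sqrCi. Qed.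
Lemma sqrt2_sq : sqrtC 2 ^+ 2 = 2 :> algC. Proof. by rewrite sqrtCK. Qed.
Lemma sqrt2_neq0 : sqrtC 2 != 0 :> algC. Proof. by rewrite sqrtC_eq0 pnatr_eq0. Qed.

Ltac case8 i := case: i => [[|[|[|[|[|[|[|[|?]]]]]]]] ?] //.
Ltac case4 i := case: i => [[|[|[|[|?]]]] ?] //.
Ltac case2 i := case: i => [[|[|?]] ?] //.

(* Entries of U6 in the computational basis |abc>, with index 4a + 2b + c. *)
Definition U6_entry (i j : nat) : algC :=
  match i, j with
  | 0, 0 | 1, 2 | 2, 1 | 3, 3 => 1
  | 4, 5 | 5, 4 | 6, 7 | 7, 6 => 1 / sqrtC 2
  | 4, 6 | 7, 5 => - 'i * (1 / sqrtC 2)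
  | 5, 7 | 6, 4 => 'i * (1 / sqrtC 2)
  | _, _ => 0
  end.

Lemma U6_table : U6 = table (2 * (2 * 2)) U6_entry.
Proof.
apply/matrixP=> i j.
rewrite /U6 /tens3 /sigma1 /sigma2 /sigma3 /I2 /S0 /S1 /S2 /S3 /table !mxE.
have := sqrt2_neq0 => s2_neq0.
by case8 i; case8 j; simpl; field: sqr_i sqrt2_sq.
Qed.

Lemma conj_inv_sqrt2 : (1 / sqrtC 2)^* = 1 / sqrtC 2 :> algC.
Proof. by rewrite geC0_conj // divr_ge0 ?ler01 // sqrtC_ge0 ler0n. Qed.

Lemma conj_i_inv_sqrt2 : ('i * (1 / sqrtC 2))^* = - 'i * (1 / sqrtC 2) :> algC.
Proof. by rewrite rmorphM /= conj_inv_sqrt2 conjCi. Qed.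

Lemma U6_selfadjoint : adjmx U6 = U6.
Proof.
have conj_mi : (- 'i * (1 / sqrtC 2))^* = 'i * (1 / sqrtC 2) :> algC.
  by rewrite mulNr raddfN /= conj_i_inv_sqrt2 mulNr opprK.
rewrite U6_table /adjmx; apply/matrixP=> i j; rewrite !mxE.
by case8 i; case8 j; simpl; rewrite ?(conj_mi, conj_i_inv_sqrt2, rmorph1, rmorph0, conj_inv_sqrt2).
Qed.

Lemma U6_involution : U6 *m U6 = 1%:M.
Proof.
rewrite U6_table /table; apply/matrixP=> i j; rewrite mxE !big_ord_recl big_ord0 !mxE.
have := sqrt2_neq0 => s2_neq0.
by case8 i; case8 j; simpl; field: sqr_i sqrt2_sq.
Qed.

Lemma U6_unitary : unitary U6.
Proof. by rewrite /unitary U6_selfadjoint U6_involution. Qed.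

(* An explicit decomposition of U6 into six elementary tensors, using
   (P (x) P + Q (x) Q) = ((P + Q) (x) (P + Q) + (P - Q) (x) (P - Q)) / 2. *)
Definition A6 (j : 'I_6) : M2 :=
  if (j < 4)%N then (1 / 4) *: S0 else (1 / sqrtC 2) *: S3.
Definition B6 (j : 'I_6) : M2 :=
  match nat_of_ord j with
  | 0 => I2 + sigma1 | 1 => I2 - sigma1 | 2 => sigma2 + sigma3
  | 3 => sigma2 - sigma3 | 4 => I2 | _ => sigma2 end.
Definition C6 (j : 'I_6) : M2 :=
  match nat_of_ord j with
  | 0 => I2 + sigma1 | 1 => I2 - sigma1 | 2 => sigma2 + sigma3
  | 3 => sigma2 - sigma3 | 4 => sigma1 | _ => sigma3 end.

Lemma U6_sr_le6 : sr_le U6 6.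
Proof.
exists A6, B6, C6; rewrite U6_table; apply/matrixP=> i j.
rewrite summxE !big_ord_recl big_ord0 /=.
rewrite /A6 /B6 /C6 /= /tens3 /sigma1 /sigma2 /sigma3 /I2 /S0 /S1 /S2 /S3 /table !mxE.
have := sqrt2_neq0 => s2_neq0.
by case8 i; case8 j; simpl; field: sqr_i sqrt2_sq.
Qed.

(* The two A-slices of U6: the swap X of B and C, and a matrix Y with
   Y X = Y, Y^2 = 0 and rank Y = 2. *)
Definition X_entry (i j : nat) : algC :=
  match i, j with
  | 0, 0 | 1, 2 | 2, 1 | 3, 3 => 1
  | _, _ => 0
  end.
Definition Y_entry (i j : nat) : algC :=
  match i, j with
  | 0, 1 | 0, 2 | 3, 1 | 3, 2 => 1 / sqrtC 2
  | 1, 0 | 2, 3 => - 'i * (1 / sqrtC 2)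
  | 1, 3 | 2, 0 => 'i * (1 / sqrtC 2)
  | _, _ => 0
  end.
Definition X := table (2 * 2) X_entry.
Definition Y := table (2 * 2) Y_entry.

Lemma U6_slice0 : sliceA 0 U6 = X.
Proof. by rewrite U6_table; apply/matrixP=> p q; rewrite !mxE; case4 p; case4 q. Qed.
Lemma U6_slice1 : sliceA 1 U6 = Y.
Proof. by rewrite U6_table; apply/matrixP=> p q; rewrite !mxE; case4 p; case4 q. Qed.

Lemma X_involution : X *m X = 1%:M.
Proof.
apply/matrixP=> i j; rewrite mxE !big_ord_recl big_ord0 !mxE.
by case4 i; case4 j; simpl; ring.
Qed.

Lemma Y_X : Y *m X = Y.
Proof.
apply/matrixP=> i j; rewrite mxE !big_ord_recl big_ord0 !mxE.
by case4 i; case4 j; simpl; ring.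
Qed.

Lemma Y_square_zero : Y *m Y = 0.
Proof.
apply/matrixP=> i j; rewrite mxE !big_ord_recl big_ord0 !mxE.
have := sqrt2_neq0 => s2_neq0.
by case4 i; case4 j; simpl; field: sqr_i sqrt2_sq.
Qed.

(* rank Y >= 2, witnessed by a compression PY Y QY = 1 to a 2x2 identity. *)
Definition PY : 'M[algC]_(2, 2 * 2) := \matrix_(i, j) (i == j :> nat)%:R.
Definition QY : 'M[algC]_(2 * 2, 2) :=
  \matrix_(i, j) (match nat_of_ord i, nat_of_ord j with
                  | 1, 0 => sqrtC 2 | 0, 1 => 'i * sqrtC 2 | _, _ => 0 end).

Lemma Y_rank_ge2 : (2 <= \rank Y)%N.
Proof.
have PYQ : PY *m Y *m QY = 1%:M.
  apply/matrixP=> i j; rewrite !(mxE, big_ord_recl, big_ord0).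
  have := sqrt2_neq0 => s2_neq0.
  by case2 i; case2 j; simpl; field: sqr_i sqrt2_sq.
have := mxrankM_maxl (PY *m Y) QY; rewrite PYQ mxrank1.
by move/leq_trans; apply; exact: mxrankM_maxr.
Qed.

(* Any decomposition of U6 uses at least six elementary tensors: otherwise its
   A-slices X (invertible) and Y = Y X (square-zero of rank 2) would form a
   pencil contradicting square_zero_pencil_rank_le1 with n = 4, r <= 5. *)
Lemma U6_sr_ge6 r : sr_le U6 r -> (6 <= r)%N.
Proof.
move=> [A [B [C U6E]]]; rewrite leqNgt; apply/negP => short_sum.
have slice a : sliceA a U6 = flat_cols B *m diag_mx (\row_j A j a a) *m flat_rows C.
  by rewrite U6E sliceA_sum.
have := @square_zero_pencil_rank_le1 _ _ _ (flat_cols B) (flat_rows C)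
  (\row_j A j 0 0) (\row_j A j 1 1) X short_sum.
rewrite -!slice U6_slice0 U6_slice1 Y_X => /(_ X_involution Y_square_zero).
by rewrite leqNgt (leq_trans _ Y_rank_ge2).
Qed.

Theorem mainTheorem5 : unitary U6 /\ sr_eq U6 6.
Proof.
split; first exact: U6_unitary.
split; first exact: U6_sr_le6.
exact: U6_sr_ge6.
Qed.
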